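(* Let $S$ be an infinite set and $\mathcal{F}\subseteq 2^S$ countable, nontrivial, and closed under finite unions and finite intersections. Let $A,C\subseteq S$ with $A$ infinite, $C$ infinite, $S\setminus C$ infinite, $A\cap C=\emptyset$, and $A\notin\mathit{cclass}_1(C,\mathcal{F})$. Then there exists $B\subseteq A$ with $B\in\mathit{ccore}_1(C,\mathcal{F})$.
   Context: $\mathcal{F}$ is nontrivial if $\emptyset,S\in\mathcal{F}$ and for all $Q\in\mathcal{F}$ and finite $E\subseteq S$ both $Q\cup E\in\mathcal{F}$ and $Q\setminus E\in\mathcal{F}$. For $C\subseteq S$ and an infinite $A\subseteq S\setminus C$: $A\in\mathit{cclass}_1(C,\mathcal{F})$ iff there is $Q\in\mathcal{F}$ with $S\setminus Q\in\mathcal{F}$, $C\subseteq Q$ and $A\subseteq S\setminus Q$; $B\in\mathit{ccore}_1(C,\mathcal{F})$ iff $B$ is an infinite subset of $S\setminus C$ and every infinite $B'\subseteq B$ satisfies $B'\notin\mathit{cclass}_1(C,\mathcal{F})$. *)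

(* plain sets over an ambient type T, which plays the role of S. *)
From Stdlib Require Import List.

Definition set (T : Type) := T -> Prop.

Definition subset {T} (X Y : set T) : Prop := forall x, X x -> Y x.
Definition setU {T} (X Y : set T) : set T := fun x => X x \/ Y x.
Definition setI {T} (X Y : set T) : set T := fun x => X x /\ Y x.
Definition setD {T} (X Y : set T) : set T := fun x => X x /\ ~ Y x.
Definition setC {T} (X : set T) : set T := fun x => ~ X x.
Definition set0 {T} : set T := fun _ => False.
Definition setT {T} : set T := fun _ => True.

Definition finite_set {T} (X : set T) : Prop :=
  exists l : list T, forall x, X x -> In x l.
Definition infinite_set {T} (X : set T) : Prop := ~ finite_set X.

Definition family (T : Type) := set T -> Prop.

(* countable family: enumerated by nat (families here contain set0, so nonempty) *)
Definition countable_family {T} (F : family T) : Prop :=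
  exists e : nat -> set T, (forall n, F (e n)) /\ forall Q, F Q -> exists n, e n = Q.

Definition nontrivial {T} (F : family T) : Prop :=
  F set0 /\ F setT /\
  forall Q E, F Q -> finite_set E -> F (setU Q E) /\ F (setD Q E).

Definition closed_union_inter {T} (F : family T) : Prop :=
  forall Q1 Q2, F Q1 -> F Q2 -> F (setU Q1 Q2) /\ F (setI Q1 Q2).

Definition cclass1 {T} (C : set T) (F : family T) (A : set T) : Prop :=
  infinite_set A /\ subset A (setC C) /\
  exists Q, F Q /\ F (setC Q) /\ subset C Q /\ subset A (setC Q).

Definition ccore1 {T} (C : set T) (F : family T) (B : set T) : Prop :=
  infinite_set B /\ subset B (setC C) /\
  forall B', subset B' B -> infinite_set B' -> ~ cclass1 C F B'.

(* F is a family of *sets*: membership respects extensional equality of subsets *)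
Definition ext_family {T} (F : family T) : Prop :=
  forall Q Q', (forall x, Q x <-> Q' x) -> F Q -> F Q'.

(* Enumerate F as e_0, e_1, ... and let D_n be the intersection of those e_k, k <= n,
   that are separators of C (members Q of F with S \ Q in F and C ⊆ Q).  Each D_n is a
   separator, so, as A is not in cclass_1(C, F), A ∩ D_n is infinite and we can pick
   pairwise distinct b_n ∈ A ∩ D_n.  If an infinite B' ⊆ {b_n} were separated from C by
   some Q = e_k, then B' would avoid all b_n with n >= k (they lie in D_n ⊆ e_k), so
   B' would be finite. *)
From Stdlib Require Import List Arith Classical ClassicalEpsilon Lia.

Definition separator {T} (F : family T) (C Q : set T) : Prop :=
  F Q /\ F (setC Q) /\ subset C Q.

Definition range {T} (b : nat -> T) : set T := fun x => exists n, x = b n.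

Lemma finite_set_subset {T} (X Y : set T) :
  subset X Y -> finite_set Y -> finite_set X.
Proof. intros HXY [l Hl]; exists l; auto. Qed.

Section Separators.
Variables (T : Type) (F : family T) (C : set T).
Hypothesis F_ext : ext_family F.

Lemma separator_ext (Q Q' : set T) :
  (forall x, Q x <-> Q' x) -> separator F C Q -> separator F C Q'.
Proof.
  intros HQQ' [HQ [HQc HCQ]]; split; [|split].
  - exact (F_ext _ _ HQQ' HQ).
  - apply (F_ext (setC Q)); [|exact HQc].
    intro x; unfold setC; rewrite (HQQ' x); tauto.
  - intros x Hx; apply HQQ'; auto.
Qed.

Lemma separator_setT : nontrivial F -> separator F C setT.
Proof.
  intros [HF0 [HFT _]]; split; [exact HFT|split; [|now intros x _]].
  apply (F_ext set0); [|exact HF0].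
  intro x; unfold set0, setC, setT; tauto.
Qed.

Lemma separator_setI (Q1 Q2 : set T) : closed_union_inter F ->
  separator F C Q1 -> separator F C Q2 -> separator F C (setI Q1 Q2).
Proof.
  intros Hcl [HQ1 [HQ1c HCQ1]] [HQ2 [HQ2c HCQ2]]; split; [|split].
  - exact (proj2 (Hcl _ _ HQ1 HQ2)).
  - apply (F_ext (setU (setC Q1) (setC Q2))); [|exact (proj1 (Hcl _ _ HQ1c HQ2c))].
    intro x; unfold setU, setI, setC.
    destruct (classic (Q1 x)); tauto.
  - intros x Hx; split; auto.
Qed.

Lemma separator_setD_finite (Q E : set T) : nontrivial F ->
  separator F C Q -> finite_set E -> (forall x, E x -> ~ C x) ->
  separator F C (setD Q E).
Proof.
  intros [_ [_ Hfin]] [HQ [HQc HCQ]] HE HEC; split; [|split].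
  - exact (proj2 (Hfin _ _ HQ HE)).
  - apply (F_ext (setU (setC Q) E)); [|exact (proj1 (Hfin _ _ HQc HE))].
    intro x; unfold setU, setD, setC.
    destruct (classic (Q x)); destruct (classic (E x)); tauto.
  - intros x Hx; split; [auto|]; intro HEx; exact (HEC x HEx Hx).
Qed.

(* Removing the finitely many points of l outside C from Q would otherwise put A in
   cclass_1(C, F). *)
Lemma not_cclass1_meets_separator (A Q : set T) : nontrivial F ->
  infinite_set A -> subset A (setC C) -> ~ cclass1 C F A -> separator F C Q ->
  forall l : list T, exists x, A x /\ Q x /\ ~ In x l.
Proof.
  intros Hnt HA HAC Hncl HQ l; apply NNPP; intro Hnone.
  set (E := fun x => In x l /\ ~ C x).
  assert (HE : finite_set E) by (exists l; intros x [Hx _]; exact Hx).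
  destruct (separator_setD_finite Q E Hnt HQ HE (fun x Hx => proj2 Hx))
    as [HQE [HQEc HCQE]].
  apply Hncl; split; [exact HA|split; [exact HAC|]].
  exists (setD Q E); split; [exact HQE|split; [exact HQEc|split; [exact HCQE|]]].
  intros x HAx [HQx HEx]; apply HEx; split.
  - apply NNPP; intro Hl; apply Hnone; exists x; auto.
  - exact (HAC x HAx).
Qed.

Variable e : nat -> set T.

(* [e n] if it is a separator, and the whole of S otherwise. *)
Definition separator_guard (n : nat) : set T :=
  fun x => separator F C (e n) -> e n x.

Fixpoint separator_chain (n : nat) : set T :=
  match n with
  | 0 => separator_guard 0
  | S n => setI (separator_chain n) (separator_guard (S n))
  end.

Lemma separator_of_guard n : nontrivial F -> separator F C (separator_guard n).
Proof.
  intro Hnt; destruct (classic (separator F C (e n))) as [Hs|Hs].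
  - apply (separator_ext (e n)); [|exact Hs].
    intro x; unfold separator_guard; tauto.
  - apply (separator_ext setT); [|exact (separator_setT Hnt)].
    intro x; unfold separator_guard, setT; tauto.
Qed.

Lemma separator_of_chain n : nontrivial F -> closed_union_inter F ->
  separator F C (separator_chain n).
Proof.
  intros Hnt Hcl; induction n as [|n IHn]; simpl.
  - exact (separator_of_guard 0 Hnt).
  - exact (separator_setI _ _ Hcl IHn (separator_of_guard (S n) Hnt)).
Qed.

Lemma separator_chain_sub k n x :
  k <= n -> separator F C (e k) -> separator_chain n x -> e k x.
Proof.
  intros Hkn Hs; induction n as [|n IHn]; simpl.
  - intro Hg; assert (k = 0) as -> by lia; exact (Hg Hs).
  - intros [Hx Hg]; destruct (Nat.eq_dec k (S n)) as [->|Hne]; auto.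
    apply IHn; [lia|exact Hx].
Qed.

End Separators.

Section InjectiveChoice.
Variables (T : Type) (pick : nat -> list T -> T).

Fixpoint chosen_prefix (n : nat) : list T :=
  match n with 0 => nil | S n => pick n (chosen_prefix n) :: chosen_prefix n end.

Lemma in_chosen_prefix m n : m < n -> In (pick m (chosen_prefix m)) (chosen_prefix n).
Proof.
  induction n as [|n IHn]; intro Hmn; [lia|simpl].
  destruct (Nat.eq_dec m n) as [->|Hne]; [now left|right; apply IHn; lia].
Qed.

End InjectiveChoice.

Lemma injective_choice {T} (X : nat -> set T) :
  (forall n (l : list T), exists x, X n x /\ ~ In x l) ->
  exists b : nat -> T, (forall n, X n (b n)) /\ (forall m n, b m = b n -> m = n).
Proof.
  intro Hex.
  set (pick := fun n l => proj1_sig (constructive_indefinite_description _ (Hex n l))).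
  assert (Hpick : forall n l, X n (pick n l) /\ ~ In (pick n l) l)
    by (intros n l; exact (proj2_sig (constructive_indefinite_description _ (Hex n l)))).
  exists (fun n => pick n (chosen_prefix T pick n)); split; [intro n; apply Hpick|].
  assert (Hlt : forall m n, m < n ->
    pick m (chosen_prefix T pick m) <> pick n (chosen_prefix T pick n)).
  { intros m n Hmn Heq; apply (proj2 (Hpick n (chosen_prefix T pick n))).
    rewrite <- Heq; exact (in_chosen_prefix T pick m n Hmn). }
  intros m n Heq; destruct (Nat.lt_total m n) as [H|[H|H]]; auto.
  - now destruct (Hlt m n H).
  - now destruct (Hlt n m H).
Qed.

Lemma infinite_range_injective {T} (b : nat -> T) :
  (forall m n, b m = b n -> m = n) -> infinite_set (range b).
Proof.
  intros Hinj [l Hl].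
  assert (Hnd : NoDup (map b (seq 0 (S (length l)))))
    by (apply NoDup_map_NoDup_ForallPairs; [intros m n _ _; apply Hinj|apply seq_NoDup]).
  assert (Hincl : incl (map b (seq 0 (S (length l)))) l).
  { intros x Hx; apply in_map_iff in Hx as [n [<- _]]; apply Hl; now exists n. }
  pose proof (NoDup_incl_length Hnd Hincl) as Hlen.
  rewrite length_map, length_seq in Hlen; lia.
Qed.

Lemma finite_range_prefix {T} (b : nat -> T) (k : nat) :
  finite_set (fun x => exists n, n < k /\ x = b n).
Proof.
  exists (map b (seq 0 k)); intros x [n [Hn ->]].
  apply in_map, in_seq; lia.
Qed.

Theorem lemma4p5 (T : Type) (F : family T) (A C : set T) :
  infinite_set (@setT T) ->
  ext_family F -> countable_family F -> nontrivial F -> closed_union_inter F ->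
  infinite_set A -> infinite_set C -> infinite_set (setC C) ->
  (forall x, A x -> C x -> False) ->
  ~ cclass1 C F A ->
  exists B, subset B A /\ ccore1 C F B.
Proof.
  intros _ Hext [e [_ He]] Hnt Hcl HA _ _ HAC Hncl.
  assert (HACc : subset A (setC C)) by exact HAC.
  destruct (injective_choice (fun n x => A x /\ separator_chain T F C e n x))
    as [b [Hb Hinj]].
  { intros n l.
    destruct (not_cclass1_meets_separator T F C Hext A _ Hnt HA HACc Hncl
                (separator_of_chain T F C Hext e n Hnt Hcl) l)
      as [x [HAx [Hx Hl]]].
    now exists x. }
  assert (HbA : subset (range b) A) by (intros x [n ->]; apply Hb).
  exists (range b); split; [exact HbA|split; [exact (infinite_range_injective b Hinj)|]].
  split; [intros x Hx; exact (HACc x (HbA x Hx))|].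
  intros B' HB' HB'inf [_ [_ [Q [HQ [HQc [HCQ HB'Q]]]]]].
  destruct (He Q HQ) as [k <-].
  apply HB'inf, (finite_set_subset _ (fun x => exists n, n < k /\ x = b n));
    [intros x Hx|apply finite_range_prefix].
  destruct (HB' x Hx) as [n ->]; exists n; split; [|reflexivity].
  destruct (Nat.lt_ge_cases n k) as [Hnk|Hkn]; [exact Hnk|exfalso].
  apply (HB'Q _ Hx), (separator_chain_sub T F C e k n _ Hkn (conj HQ (conj HQc HCQ))).
  apply Hb.
Qed.
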